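(* (1) Let $G=(V,E)$ be a graph with non-negative edge weights $w:E\to\mathbb{R}_{\ge0}$. The Steiner tree diversity of $G$ is the unique maximal diversity $\delta$ on $V$ (with respect to the pointwise order $\delta_1\preceq\delta_2$ iff $\delta_1(A)\le\delta_2(A)$ for all finite $A$) such that $\delta(\{u,v\})\le w(\{u,v\})$ for all $\{u,v\}\in E$. (2) Let $H=(V,E)$ be a hypergraph with non-negative weights $w:E\to\mathbb{R}_{\ge0}$. The hypergraph Steiner diversity of $H$ is the unique maximal diversity $\delta$ on $V$ (with respect to $\preceq$) such that $\delta(A)\le w(A)$ for all $A\in E$.
   Context: A diversity on a set $X$ is a function $\delta$ from finite subsets of $X$ to $\mathbb{R}$ with $\delta(A)\ge 0$, $\delta(A)=0$ whenever $|A|\le 1$ (values $0$ on larger sets are allowed), and $\delta(A\cup B)+\delta(B\cup C)\ge\delta(A\cup C)$ for all finite $A,B,C$ with $B\neq\emptyset$. The Steiner tree diversity of a weighted graph assigns to $A\subseteq V$ the minimum total weight of a connected subgraph of $G$ containing $A$. The hypergraph Steiner diversity assigns to $A\subseteq V$ the minimum of $\sum_{e\in E'}w(e)$ over all $E'\subseteq E$ such that the sub-hypergraph induced by $E'$ is connected and includes $A$. *)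

From mathcomp Require Import all_boot all_order all_algebra.
From mathcomp Require Import reals.
Set Implicit Arguments. Unset Strict Implicit. Unset Printing Implicit Defensive.
Import Order.TTheory GRing.Theory Num.Theory.
Local Open Scope ring_scope.

Section Defs.
Variables (R : realType) (V : finType).

Definition is_diversity (d : {set V} -> R) : Prop :=
  [/\ (forall A : {set V}, 0 <= d A),
      (forall A : {set V}, (#|A| <= 1)%N -> d A = 0) &
      (forall A B C : {set V}, B != set0 -> d (A :|: C) <= d (A :|: B) + d (B :|: C))].

Definition div_le (d1 d2 : {set V} -> R) : Prop := forall A : {set V}, d1 A <= d2 A.

Definition adj (F : {set {set V}}) : rel V :=
  fun x y => [exists e in F, (x \in e) && (y \in e)].

Definition feasible (E : {set {set V}}) (A : {set V})
    (p : {set V} * {set {set V}}) : bool :=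
  [&& p.2 \subset E,
      [forall e in p.2, e \subset p.1],
      A \subset p.1 &
      [forall x in p.1, forall y in p.1, connect (adj p.2) x y]].

Definition connected_hg (E : {set {set V}}) : bool :=
  [forall x, forall y, connect (adj E) x y].

(* The big-min is seeded with the total weight of E, which is attained by the
   feasible candidate (setT, E) when (V,E) is connected and is an upper bound
   of the minimum since weights are nonnegative. *)
Definition steiner (E : {set {set V}}) (w : {set V} -> R) (A : {set V}) : R :=
  \big[Order.min/ \sum_(e in E) w e]_(p | feasible E A p) \sum_(e in p.2) w e.

Definition steiner_tree_diversity := steiner.
Definition hypergraph_steiner_diversity := steiner.

Definition unique_maximal (P : ({set V} -> R) -> Prop) (d : {set V} -> R) : Prop :=
  [/\ is_diversity d, P d,
      (forall d', is_diversity d' -> P d' -> div_le d' d) &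
      (forall d', is_diversity d' -> P d' ->
         (forall d'', is_diversity d'' -> P d'' -> div_le d' d'' -> d'' = d') ->
         d' = d)].

End Defs.

(* A diversity d is monotone, and d (X :|: Y) <= d X + d Y whenever X and Y
   meet. Growing a connected edge set one edge at a time from a vertex thus
   gives d S <= sum of d e over the edges of any connected subgraph on S, so
   every diversity bounded by w on the edges is bounded by the Steiner
   diversity. The Steiner diversity is itself a diversity bounded by w on the
   edges (two connected subgraphs sharing a vertex glue to a connected one),
   so it is the greatest such diversity, hence the unique maximal one. *)
From mathcomp Require Import all_boot all_order all_algebra.
From mathcomp Require Import reals.
Set Implicit Arguments. Unset Strict Implicit. Unset Printing Implicit Defensive.
Import Order.TTheory GRing.Theory Num.Theory.
Local Open Scope ring_scope.

Section NonnegativeSums.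
Variables (R : realDomainType) (I : finType).

Lemma ler_sum_subpred (P Q : pred I) (F : I -> R) :
  (forall i, P i -> Q i) -> (forall i, Q i -> 0 <= F i) ->
  \sum_(i | P i) F i <= \sum_(i | Q i) F i.
Proof.
move=> PQ F_ge0; rewrite [X in X <= _]big_mkcond [X in _ <= X]big_mkcond /=.
apply: ler_sum => i _; case Pi: (P i); first by rewrite PQ.
by case Qi: (Q i) => //; apply: F_ge0.
Qed.

Lemma ler_sum_setU (A B : {set I}) (F : I -> R) :
  (forall i, i \in B -> 0 <= F i) ->
  \sum_(i in A :|: B) F i <= \sum_(i in A) F i + \sum_(i in B) F i.
Proof.
move=> F_ge0; rewrite (big_setID A) /= (setIidPr (subsetUl A B)) lerD2l.
apply: ler_sum_subpred => // i.
by rewrite !inE => /andP[/negbTE -> ].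
Qed.

End NonnegativeSums.

Section Adjacency.
Variable V : finType.
Implicit Types (F G : {set {set V}}) (S : {set V}).

Lemma adj_connect_sym F : connect_sym (adj F).
Proof.
apply: sym_connect_sym => x y.
by apply/existsP/existsP=> -[e /and3P[eF xe ye]]; exists e; rewrite eF xe ye.
Qed.

Lemma connect_adj_subset F G x y :
  F \subset G -> connect (adj F) x y -> connect (adj G) x y.
Proof.
move=> FG; apply: connect_sub => u v /existsP[e /andP[eF uve]].
by apply: connect1; apply/existsP; exists e; rewrite (subsetP FG).
Qed.

Lemma connect_adj_closed F S x y :
  (forall e, e \in F -> e :&: S != set0 -> e \subset S) ->
  x \in S -> connect (adj F) x y -> y \in S.
Proof.
move=> closedS xS /connectP[p + ->]; elim: p x xS => //= z p IHp x xS.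
case/andP=> /existsP[e /and3P[eF xe ze]]; apply: IHp.
apply: (subsetP (closedS e eF _)) ze.
by apply/set0Pn; exists x; rewrite inE xe.
Qed.

End Adjacency.

Section Diversity.
Variables (R : realType) (V : finType) (d : {set V} -> R).
Hypothesis d_div : is_diversity d.
Implicit Types A B C X Y S : {set V}.

Lemma diversity_ge0 A : 0 <= d A.
Proof. by case: d_div. Qed.

Lemma diversity_small A : (#|A| <= 1)%N -> d A = 0.
Proof. by case: d_div => _ + _; apply. Qed.

Lemma diversity_triangle A B C :
  B != set0 -> d (A :|: C) <= d (A :|: B) + d (B :|: C).
Proof. by case: d_div => _ _; apply. Qed.

Lemma diversity_setU1 A y : d A <= d (y |: A).
Proof.
have := @diversity_triangle set0 [set y] A; rewrite !set0U.
rewrite (@diversity_small [set y]) ?cards1 // add0r; apply.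
by apply/set0Pn; exists y; rewrite inE.
Qed.

Lemma diversity_mono A B : A \subset B -> d A <= d B.
Proof.
move eqn: #|B :\: A| => n; elim: n A eqn => [|n IHn] A eqn AB.
  move/eqP: eqn; rewrite cards_eq0 setD_eq0 => BA.
  by rewrite (_ : A = B) //; apply/eqP; rewrite eqEsubset AB.
have /set0Pn[y] : B :\: A != set0 by rewrite -card_gt0 eqn.
rewrite inE => /andP[yA yB]; apply: le_trans (diversity_setU1 A y) _.
apply: IHn; last by rewrite subUset sub1set yB AB.
move: eqn; rewrite (cardsD1 y) !inE yA yB add1n => -[<-].
by rewrite setDDl setUC.
Qed.

Lemma diversity_setU X Y : X :&: Y != set0 -> d (X :|: Y) <= d X + d Y.
Proof.
case/set0Pn=> z /setIP[zX zY].
have := @diversity_triangle X [set z] Y.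
rewrite (setUidPl (_ : [set z] \subset X)) ?sub1set //.
rewrite (setUidPr (_ : [set z] \subset Y)) ?sub1set //; apply.
by apply/set0Pn; exists z; rewrite inE.
Qed.

Lemma diversity_add_edge (F : {set {set V}}) S e :
  e \in F -> ~~ (e \subset S) -> S :&: e != set0 ->
  d S <= \sum_(f in F | f \subset S) d f ->
  d (S :|: e) <= \sum_(f in F | f \subset S :|: e) d f.
Proof.
move=> eF eS Se_meet dS; apply: le_trans (diversity_setU Se_meet) _.
rewrite [X in _ <= X](bigD1 e) /= ?eF ?subsetUr // addrC lerD2r.
apply: le_trans dS _; apply: ler_sum_subpred => [f /andP[-> fS]|f _].
  rewrite (subset_trans fS (subsetUl _ _)) andbT.
  by apply: contraNneq eS => <-.
exact: diversity_ge0.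
Qed.

(* A largest set containing x that satisfies the bound is closed under the
   edges meeting it, hence contains every vertex connected to x. *)
Lemma diversity_le_sum_edges (F : {set {set V}}) S x :
  (forall e, e \in F -> e \subset S) -> x \in S ->
  (forall y, y \in S -> connect (adj F) x y) ->
  d S <= \sum_(e in F) d e.
Proof.
move=> FS xS connS.
pose good (T : {set V}) := [&& x \in T, T \subset S & d T <= \sum_(e in F | e \subset T) d e].
have good_x : good [set x].
  rewrite /good set11 sub1set xS diversity_small ?cards1 //.
  by apply: sumr_ge0 => e _; apply: diversity_ge0.
case: (arg_maxnP (fun T : {set V} => #|T|) good_x) => T /and3P[xT TS dT] maxT.
have closedT e : e \in F -> e :&: T != set0 -> e \subset T.
  move=> eF eT; apply: contraTT isT => eNT.
  have /maxT : good (T :|: e).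
    by rewrite /good inE xT subUset TS FS // diversity_add_edge // setIC.
  by rewrite /= leqNgt proper_card // properUl.
have -> : S = T.
  apply/eqP; rewrite eqEsubset TS andbT; apply/subsetP=> y yS.
  exact: connect_adj_closed closedT xT (connS y yS).
apply: le_trans dT _; apply: ler_sum_subpred => [e /andP[]//|e _].
exact: diversity_ge0.
Qed.

End Diversity.

Section Steiner.
Variables (R : realType) (V : finType) (E : {set {set V}}) (w : {set V} -> R).
Implicit Types (A B : {set V}) (p q : {set V} * {set {set V}}).

Lemma feasibleP A p :
  reflect [/\ p.2 \subset E, forall e, e \in p.2 -> e \subset p.1,
              A \subset p.1 &
              forall x y, x \in p.1 -> y \in p.1 -> connect (adj p.2) x y]
          (feasible E A p).
Proof.
apply: (iffP and4P) => -[pE pV Ap pconn]; split=> //.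
- by move/forall_inP: pV.
- by move=> x y xp yp; move/forall_inP: pconn => /(_ x xp) /forall_inP; apply.
- by apply/forall_inP.
- by apply/forall_inP=> x xp; apply/forall_inP=> y yp; apply: pconn.
Qed.

Lemma steiner_le_feasible A p :
  feasible E A p -> steiner E w A <= \sum_(e in p.2) w e.
Proof. by move=> Ap; rewrite /steiner (bigD1 p) //= ge_min lexx. Qed.

Lemma feasible_subset A B p : A \subset B -> feasible E B p -> feasible E A p.
Proof.
by move=> AB /feasibleP[pE pV Bp pconn]; apply/feasibleP; split=> //; apply: subset_trans Bp.
Qed.

Lemma feasible_setT A : connected_hg E -> feasible E A (setT, E).
Proof.
move=> connE; apply/feasibleP; split=> [||| x y _ _] //=.
by move/forallP: connE => /(_ x) /forallP.
Qed.

Lemma feasible_small A : (#|A| <= 1)%N -> feasible E A (A, set0).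
Proof.
move=> A_small; apply/feasibleP; split=> [||| x y xA yA] //=.
- exact: sub0set.
- by move=> e; rewrite inE.
- by move/card_le1_eqP: A_small => /(_ x y xA yA) ->; exact: connect0.
Qed.

Lemma feasible_edge e : e \in E -> feasible E e (e, [set e]).
Proof.
move=> eE; apply/feasibleP; split=> [||| x y xe ye] //=.
- by rewrite sub1set.
- by move=> f /set1P ->.
- by apply: connect1; apply/existsP; exists e; rewrite set11 xe ye.
Qed.

Lemma feasible_setU A B p q :
  feasible E A p -> feasible E B q -> p.1 :&: q.1 != set0 ->
  feasible E (A :|: B) (p.1 :|: q.1, p.2 :|: q.2).
Proof.
move=> /feasibleP[pE pV Ap pconn] /feasibleP[qE qV Bq qconn].
case/set0Pn=> b /setIP[bp bq].
have to_b z : z \in p.1 :|: q.1 -> connect (adj (p.2 :|: q.2)) z b.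
  case/setUP=> [zp|zq].
    by apply: connect_adj_subset (subsetUl _ _) (pconn z b zp bp).
  by apply: connect_adj_subset (subsetUr _ _) (qconn z b zq bq).
apply/feasibleP; split=> /=; first by rewrite subUset pE qE.
- move=> e /setUP[ep|eq].
    exact: subset_trans (pV e ep) (subsetUl _ _).
  exact: subset_trans (qV e eq) (subsetUr _ _).
- exact: setUSS.
- move=> x y /to_b xb /to_b yb.
  by apply: connect_trans xb _; rewrite adj_connect_sym.
Qed.

Hypothesis w_ge0 : forall e, e \in E -> 0 <= w e.
Hypothesis connE : connected_hg E.

Lemma steiner_attained A :
  exists2 p, feasible E A p & steiner E w A = \sum_(e in p.2) w e.
Proof.
apply: (big_ind (fun v => exists2 p, feasible E A p & v = \sum_(e in p.2) w e)).
- by exists (setT, E); first exact: feasible_setT.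
- by move=> _ _ [p Ap ->] [q Aq ->]; case: leP => _; [exists p | exists q].
- by move=> p Ap; exists p.
Qed.

Lemma sum_weight_ge0 (F : {set {set V}}) : F \subset E -> 0 <= \sum_(e in F) w e.
Proof. by move=> FE; apply: sumr_ge0 => e eF; apply/w_ge0/(subsetP FE). Qed.

Lemma steiner_ge0 A : 0 <= steiner E w A.
Proof.
by have [p /feasibleP[pE _ _ _] ->] := steiner_attained A; apply: sum_weight_ge0.
Qed.

Lemma steiner_is_diversity : is_diversity (steiner E w).
Proof.
split; first exact: steiner_ge0.
  move=> A A_small; apply/le_anti; rewrite steiner_ge0 andbT.
  by apply: le_trans (steiner_le_feasible (feasible_small A_small)) _; rewrite big_set0.
move=> A B C /set0Pn[b bB].
have [p ABp ->] := steiner_attained (A :|: B).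
have [q BCq ->] := steiner_attained (B :|: C).
case/feasibleP: (ABp) => _ _ /subsetP ABp1 _.
case/feasibleP: (BCq) => qE _ /subsetP BCq1 _.
have pq_meet : p.1 :&: q.1 != set0.
  by apply/set0Pn; exists b; rewrite inE ABp1 ?BCq1 // inE bB ?orbT.
have := feasible_setU ABp BCq pq_meet.
move/(feasible_subset (setUSS (subsetUl A B) (subsetUr B C)))/steiner_le_feasible.
by move/le_trans; apply; apply: ler_sum_setU => e /(subsetP qE) /w_ge0.
Qed.

Lemma steiner_le_weight e : e \in E -> steiner E w e <= w e.
Proof.
by move=> eE; apply: le_trans (steiner_le_feasible (feasible_edge eE)) _; rewrite big_set1.
Qed.

Lemma diversity_le_steiner (d : {set V} -> R) :
  is_diversity d -> (forall e, e \in E -> d e <= w e) -> div_le d (steiner E w).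
Proof.
move=> d_div d_le_w A; have [p /feasibleP[pE pV Ap pconn] ->] := steiner_attained A.
have [p0|[x xp]] := set_0Vmem p.1.
  rewrite diversity_small //; first exact: sum_weight_ge0.
  by move: Ap; rewrite p0 subset0 => /eqP ->; rewrite cards0.
apply: le_trans (diversity_mono d_div Ap) _.
apply: le_trans (diversity_le_sum_edges d_div pV xp (pconn x ^~ xp)) _.
by apply: ler_sum => e ep; apply/d_le_w/(subsetP pE).
Qed.

Lemma unique_maximal_steiner (P : ({set V} -> R) -> Prop) :
  P (steiner E w) -> (forall d, P d -> forall e, e \in E -> d e <= w e) ->
  unique_maximal P (steiner E w).
Proof.
move=> P_steiner P_le_w; split=> //; first exact: steiner_is_diversity.
  by move=> d d_div Pd; apply: diversity_le_steiner => //; apply: P_le_w.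
move=> d d_div Pd d_max; symmetry; apply: d_max => //.
  exact: steiner_is_diversity.
by apply: diversity_le_steiner => //; apply: P_le_w.
Qed.

End Steiner.

Theorem theorem3 (R : realType) :
  (* (1) graphs *)
  (forall (V : finType) (E : {set {set V}}) (w : {set V} -> R),
     (forall e : {set V}, e \in E -> #|e| = 2%N) ->
     (forall e : {set V}, e \in E -> 0 <= w e) ->
     connected_hg E ->
     unique_maximal
       (fun d => forall u v : V, [set u; v] \in E -> d [set u; v] <= w [set u; v])
       (steiner_tree_diversity E w)) /\
  (* (2) hypergraphs *)
  (forall (V : finType) (E : {set {set V}}) (w : {set V} -> R),
     (forall e : {set V}, e \in E -> 0 <= w e) ->
     connected_hg E ->
     unique_maximal
       (fun d => forall A : {set V}, A \in E -> d A <= w A)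
       (hypergraph_steiner_diversity E w)).
Proof.
split=> [V E w E_pairs w_ge0 connE | V E w w_ge0 connE].
  apply: unique_maximal_steiner => // [u v uvE|d d_le_w e eE].
    exact: steiner_le_weight.
  have /eqP/cards2P[u [v [_ e_uv]]] := E_pairs e eE.
  by rewrite e_uv in eE *; apply: d_le_w.
apply: unique_maximal_steiner => // A AE.
exact: steiner_le_weight.
Qed.
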